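(* Let $\zeta\in(0,1]$, $n'\ge1$, $p_1,\dots,p_{n'}\ge 0$ and $x_1,\dots,x_{n'}\in[0,1]$. Let $\mathcal G$ be a family of pairwise disjoint nonempty subsets (''groups'') of $\{1,\dots,n'\}$ such that for each $G'\in\mathcal G$: $\sum_{j\in G'}x_j\ge 1/10$, and $p_j\ge p_{j'}/10$ for all $j,j'\in G'$. Let $G=\bigcup_{G'\in\mathcal G}G'$ and $\bar G=\{1,\dots,n'\}\setminus G$. Let $X_1,\dots,X_{n'}$ be $\{0,1\}$-valued random variables with $\mathbb E[X_j]=x_j$ for all $j$, $\mathbb E[X_jX_{j'}]\le x_jx_{j'}$ for all $j\ne j'$, and $\mathbb E[X_jX_{j'}]\le(1-\zeta)x_jx_{j'}$ for all $j\ne j'$ lying in a common group $G'\in\mathcal G$. With $L=\sum_{j=1}^{n'}x_jp_j$, $Q=\sum_{j=1}^{n'}x_jp_j^2$, $\bar Q=\sum_{j\in\bar G}x_jp_j^2$, we have $$\mathbb E\Big[\sum_{j=1}^{n'}p_jX_j(p_1X_1+\dots+p_jX_j)\Big]\le\Big(1-\frac{\zeta}{200}\Big)Q+\frac{\zeta}{200}\bar Q+\frac12L^2.$$ *)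

From HB Require Import structures.
From mathcomp Require Import all_boot all_order all_algebra.
Set Implicit Arguments. Unset Strict Implicit. Unset Printing Implicit Defensive.
Import Order.TTheory GRing.Theory Num.Theory.
Local Open Scope ring_scope.

(* The joint law of a {0,1}-valued random vector (X_1,...,X_n) is a
   probability distribution on outcomes w : {ffun 'I_n -> bool};
   X_j(w) = w j. *)
Definition is_distribution (R : numDomainType) (n : nat)
  (mu : {ffun 'I_n -> bool} -> R) : Prop :=
  (forall w, 0 <= mu w) /\ \sum_(w : {ffun 'I_n -> bool}) mu w = 1.

Definition expect (R : numDomainType) (n : nat)
  (mu : {ffun 'I_n -> bool} -> R) (f : {ffun 'I_n -> bool} -> R) : R :=
  \sum_(w : {ffun 'I_n -> bool}) mu w * f w.

Definition Xv {R : numDomainType} {n : nat} (j : 'I_n)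
  (w : {ffun 'I_n -> bool}) : R := (w j)%:R.

From HB Require Import structures.
From mathcomp Require Import all_boot all_order all_algebra.
From mathcomp Require Import ring lra.
Import Order.TTheory GRing.Theory Num.Theory.
Local Open Scope ring_scope.

(* Expanding the square, twice the expectation equals the sum of
   p_i p_j E[X_i X_j] over all pairs plus the diagonal Q (as X_j^2 = X_j).
   Off the diagonal, E[X_i X_j] <= x_i x_j gives L^2, with a saving of
   zeta p_i p_j x_i x_j for every pair inside a group.  Inside a group the p_j
   are within a factor 10 of each other and the x_j sum to at least 1/10, so
   the saving attributable to each j in G is at least p_j^2 x_j / 100; summed
   over G this is (Q - Qbar) / 100. *)

Lemma sum_prefix_sum_mul2 (R : comPzRingType) (n : nat) (y : 'I_n -> R) :
  (\sum_(j < n) y j * (\sum_(i < n | (i <= j)%N) y i)) *+ 2 =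
  \sum_(i < n) \sum_(j < n) y i * y j + \sum_(j < n) y j ^+ 2.
Proof.
pose S := \sum_(j < n) y j * (\sum_(i < n | (i <= j)%N) y i).
have strict_prefix : \sum_(j < n) \sum_(i < n | (i < j)%N) y i * y j =
                     S - \sum_(j < n) y j ^+ 2.
  rewrite /S -sumrB; apply: eq_bigr => j _.
  rewrite [in RHS](bigD1 j) //= mulrDr expr2 addrAC subrr add0r mulr_sumr.
  by apply: eq_big => [i | i _]; [rewrite ltn_neqAle andbC | rewrite mulrC].
have strict_suffix : \sum_(j < n) \sum_(i < n | (j < i)%N) y i * y j =
                     S - \sum_(j < n) y j ^+ 2.
  rewrite -strict_prefix (exchange_big_dep xpredT) //=.
  by apply: eq_bigr => i _; apply: eq_bigr => j _; rewrite mulrC.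
have prefix : \sum_(j < n) \sum_(i < n | (i <= j)%N) y i * y j = S.
  by apply: eq_bigr => j _; rewrite mulr_sumr; apply: eq_bigr => i _; rewrite mulrC.
rewrite exchange_big /=.
under [X in _ = X + _]eq_bigr => j _ do
  rewrite (bigID (fun i : 'I_n => (i <= j)%N)) /=.
rewrite big_split /= prefix.
under [X in _ = _ + X + _]eq_bigr => j _ do under eq_bigl => i do rewrite -ltnNge.
by rewrite strict_suffix -/S mulr2n -addrA subrK.
Qed.

Section Expectation.

Context {R : numDomainType} {n : nat} (mu : {ffun 'I_n -> bool} -> R).

Lemma eq_expect (f g : {ffun 'I_n -> bool} -> R) :
  f =1 g -> expect mu f = expect mu g.
Proof. by move=> fg; apply: eq_bigr => w _; rewrite fg. Qed.

Lemma expectD (f g : {ffun 'I_n -> bool} -> R) :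
  expect mu (fun w => f w + g w) = expect mu f + expect mu g.
Proof. by rewrite /expect -big_split; apply: eq_bigr => w _; rewrite mulrDr. Qed.

Lemma expectZ (c : R) (f : {ffun 'I_n -> bool} -> R) :
  expect mu (fun w => c * f w) = c * expect mu f.
Proof. by rewrite /expect mulr_sumr; apply: eq_bigr => w _; rewrite mulrCA. Qed.

Lemma expect_sum (I : finType) (f : I -> {ffun 'I_n -> bool} -> R) :
  expect mu (fun w => \sum_i f i w) = \sum_i expect mu (f i).
Proof.
by rewrite /expect exchange_big /=; apply: eq_bigr => w _; exact: mulr_sumr.
Qed.

Lemma Xv_mulXX (j : 'I_n) (w : {ffun 'I_n -> bool}) :
  Xv j w * Xv j w = Xv j w :> R.
Proof. by rewrite /Xv; case: (w j); rewrite ?mulr1 ?mulr0. Qed.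

Lemma expect_XX (j : 'I_n) :
  expect mu (fun w => Xv j w * Xv j w) = expect mu (Xv j).
Proof. exact/eq_expect/Xv_mulXX. Qed.

Lemma expect_prefix_sum_mul2 (p : 'I_n -> R) :
  expect mu (fun w => \sum_(j < n) p j * Xv j w *
                        (\sum_(i < n | (i <= j)%N) p i * Xv i w)) *+ 2 =
  \sum_(i < n) \sum_(j < n) p i * p j * expect mu (fun w => Xv i w * Xv j w)
  + \sum_(j < n) p j ^+ 2 * expect mu (Xv j).
Proof.
rewrite -mulr_natl -expectZ.
rewrite (@eq_expect _ (fun w => \sum_i \sum_j p i * p j * (Xv i w * Xv j w)
                                  + \sum_j p j ^+ 2 * Xv j w)); last first.
  move=> w; rewrite mulr_natl sum_prefix_sum_mul2; congr (_ + _).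
    by apply: eq_bigr => i _; apply: eq_bigr => j _; ring.
  by apply: eq_bigr => j _; rewrite exprMn [Xv j w ^+ 2]expr2 Xv_mulXX.
rewrite expectD !expect_sum; congr (_ + _); last first.
  by apply: eq_bigr => j _; rewrite expectZ.
by apply: eq_bigr => i _; rewrite expect_sum; apply: eq_bigr => j _; rewrite expectZ.
Qed.

End Expectation.

Definition same_group {n : nat} (Gs : {set {set 'I_n}}) (i j : 'I_n) : bool :=
  [exists A in Gs, (i \in A) && (j \in A)].

Section GroupedPairs.

Context {R : realFieldType} {n : nat} {zeta : R} {p x : 'I_n -> R}.
Context {Gs : {set {set 'I_n}}}.
Hypotheses (p_ge0 : forall j, 0 <= p j) (x_in01 : forall j, 0 <= x j <= 1).

Let x_ge0 j : 0 <= x j. Proof. by case/andP: (x_in01 j). Qed.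

Definition group_pair_mass : R :=
  \sum_(i < n) \sum_(j < n)
    (if same_group Gs i j then p i * p j * (x i * x j) else 0).

Lemma pair_moments_le (E : 'I_n -> 'I_n -> R) :
  zeta <= 1 ->
  (forall j, E j j = x j) ->
  (forall i j, i != j -> E i j <= x i * x j) ->
  (forall A, A \in Gs -> forall i j, i \in A -> j \in A -> i != j ->
     E i j <= (1 - zeta) * (x i * x j)) ->
  \sum_(i < n) \sum_(j < n) p i * p j * E i j <=
  (\sum_(j < n) x j * p j) ^+ 2 + \sum_(j < n) x j * p j ^+ 2
  - zeta * group_pair_mass.
Proof.
move=> zeta_le1 Ejj E_le E_group_le.
have <- : \sum_i \sum_j (p i * p j * (x i * x j)
    + (if j == i then p i ^+ 2 * x i else 0)
    - zeta * (if same_group Gs i j then p i * p j * (x i * x j) else 0)) =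
  (\sum_(j < n) x j * p j) ^+ 2 + \sum_(j < n) x j * p j ^+ 2
  - zeta * group_pair_mass.
  under eq_bigr => i _ do rewrite sumrB big_split /= -mulr_sumr.
  rewrite sumrB big_split /= -mulr_sumr; congr (_ + _ - _).
    rewrite expr2 mulr_suml; apply: eq_bigr => i _.
    by rewrite mulr_sumr; apply: eq_bigr => j _; ring.
  by apply: eq_bigr => i _; rewrite -big_mkcond big_pred1_eq mulrC.
apply: ler_sum => i _; apply: ler_sum => j _.
have pp_ge0 : 0 <= p i * p j by rewrite mulr_ge0.
have [->|ji] := eqVneq j i.
  have /andP[_ xi_le1] := x_in01 i.
  have ppxx_ge0 : 0 <= p i * p i * (x i * x i) by rewrite !mulr_ge0.
  have saving_le : zeta * (if same_group Gs i i then p i * p i * (x i * x i)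
                           else 0) <= p i * p i * (x i * x i).
    by case: ifP => _; rewrite ?mulr0 ?ler_piMl.
  have : p i * p i * (x i * x i) <= p i * p i * x i.
    by rewrite ler_wpM2l ?mulr_ge0 // ler_piMr.
  by rewrite Ejj ?eqxx expr2; lra.
rewrite addr0; rewrite eq_sym in ji.
case: ifP => [/existsP[A /andP[AG /andP[iA jA]]] | _].
  by have := ler_wpM2l pp_ge0 (E_group_le A AG i j iA jA ji); lra.
by rewrite mulr0 subr0; exact: ler_wpM2l (E_le i j ji).
Qed.

Lemma covered_mass_le_group_pair_mass :
  (forall A, A \in Gs -> 1 / 10 <= \sum_(j in A) x j) ->
  (forall A, A \in Gs -> forall i j, i \in A -> j \in A -> p j / 10 <= p i) ->
  (\sum_(i in cover Gs) x i * p i ^+ 2) / 100 <= group_pair_mass.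
Proof.
move=> mass_ge p_close.
rewrite big_mkcond mulr_suml; apply: ler_sum => i _.
case: (boolP (i \in cover Gs)) => [/bigcupP[A AG iA] | _]; last first.
  by rewrite mul0r; apply: sumr_ge0 => j _; case: ifP; rewrite ?mulr_ge0.
have group_le : \sum_(j in A) p i * p j * (x i * x j) <=
    \sum_j (if same_group Gs i j then p i * p j * (x i * x j) else 0).
  rewrite big_mkcond; apply: ler_sum => j _; case: ifP => jA.
    by have -> : same_group Gs i j by apply/existsP; exists A; rewrite AG iA jA.
  by case: ifP; rewrite ?mulr_ge0.
have p_bound : \sum_(j in A) p i * (p i / 10) * (x i * x j) <=
               \sum_(j in A) p i * p j * (x i * x j).
  apply: ler_sum => j jA; rewrite ler_wpM2r ?mulr_ge0 //.
  by rewrite ler_wpM2l // (p_close A).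
have x_bound : p i * (p i / 10) * x i * (1 / 10) <=
               \sum_(j in A) p i * (p i / 10) * (x i * x j).
  under eq_bigr => j _ do rewrite mulrA.
  by rewrite -mulr_sumr ler_wpM2l ?mass_ge // !mulr_ge0 ?invr_ge0.
by rewrite expr2; lra.
Qed.

End GroupedPairs.

Theorem lemma3 (R : realFieldType) (n : nat) (zeta : R)
  (p x : 'I_n -> R) (Gs : {set {set 'I_n}})
  (mu : {ffun 'I_n -> bool} -> R) :
  0 < zeta -> zeta <= 1 ->
  (1 <= n)%N ->
  (forall j, 0 <= p j) ->
  (forall j, 0 <= x j <= 1) ->
  (forall A B, A \in Gs -> B \in Gs -> A != B -> [disjoint A & B]) ->
  (forall A, A \in Gs -> A != set0) ->
  (forall A, A \in Gs -> 1 / 10 <= \sum_(j in A) x j) ->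
  (forall A, A \in Gs -> forall j j', j \in A -> j' \in A -> p j' / 10 <= p j) ->
  is_distribution mu ->
  (forall j, expect mu (Xv j) = x j) ->
  (forall j j', j != j' -> expect mu (fun w => Xv j w * Xv j' w) <= x j * x j') ->
  (forall A, A \in Gs -> forall j j', j \in A -> j' \in A -> j != j' ->
     expect mu (fun w => Xv j w * Xv j' w) <= (1 - zeta) * (x j * x j')) ->
  let G := cover Gs in
  let Gbar := ~: G in
  let L := \sum_(j < n) x j * p j in
  let Q := \sum_(j < n) x j * p j ^+ 2 in
  let Qbar := \sum_(j in Gbar) x j * p j ^+ 2 in
  expect mu (fun w => \sum_(j < n) p j * Xv j w *
                        (\sum_(i < n | (i <= j)%N) p i * Xv i w))
  <= (1 - zeta / 200) * Q + zeta / 200 * Qbar + L ^+ 2 / 2.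
Proof.
move=> zeta_gt0 zeta_le1 _ p_ge0 x_in01 _ _ mass_ge p_close _ EX EXX EXX_group.
cbv zeta.
have expect2 := expect_prefix_sum_mul2 mu p.
have diag : \sum_(j < n) p j ^+ 2 * expect mu (Xv j) =
            \sum_(j < n) x j * p j ^+ 2.
  by apply: eq_bigr => j _; rewrite EX mulrC.
have pairs_le := pair_moments_le p_ge0 x_in01
  (fun i j => expect mu (fun w => Xv i w * Xv j w)) zeta_le1
  (fun j => etrans (expect_XX mu j) (EX j)) EXX EXX_group.
have covered_le := covered_mass_le_group_pair_mass p_ge0 x_in01 mass_ge p_close.
have Q_split : \sum_(j < n) x j * p j ^+ 2 =
    \sum_(j in cover Gs) x j * p j ^+ 2 + \sum_(j in ~: cover Gs) x j * p j ^+ 2.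
  by rewrite (bigID (mem (cover Gs))) /=; congr (_ + _); apply: eq_bigl => j;
     rewrite in_setC.
have := ler_wpM2l (ltW zeta_gt0) covered_le.
rewrite mulr2n diag in expect2; rewrite Q_split in pairs_le expect2 *.
lra.
Qed.
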